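(* Let $(E,\rho_\theta)$ be a complete $b_v(\theta)$ metric space whose function $\theta$ is bounded, and let $S:E\to E$ be such that there is $c\in[0,1)$ with $\rho_\theta(Su,Sw)\le c\,\rho_\theta(u,w)$ for all $u,w\in E$. Then $S$ has a unique fixed point.
   Context: Let $E$ be a nonempty set, $\theta:E\times E\to[1,\infty)$ a function and $v\in\mathbb{N}$. A map $\rho_\theta:E\times E\to[0,\infty)$ is a $b_v(\theta)$ metric (and $(E,\rho_\theta)$ a $b_v(\theta)$ metric space) if for all $u,w\in E$: $\rho_\theta(u,w)=0$ iff $u=w$; $\rho_\theta(u,w)=\rho_\theta(w,u)$; and for all $u,z_1,\dots,z_v,w\in E$ pairwise distinct, $\rho_\theta(u,w)\le\theta(u,w)[\rho_\theta(u,z_1)+\rho_\theta(z_1,z_2)+\dots+\rho_\theta(z_{v-1},z_v)+\rho_\theta(z_v,w)]$. A sequence $\{u_n\}$ converges to $u$ if for every $\varepsilon>0$ there is $n_0$ with $\rho_\theta(u_n,u)<\varepsilon$ for all $n\ge n_0$; it is Cauchy if for every $\varepsilon>0$ there is $n_0$ with $\rho_\theta(u_n,u_{n+p})<\varepsilon$ for all $n\ge n_0$ and $p>0$; the space is complete if every Cauchy sequence converges in $E$. *)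

From Stdlib Require Import Reals List.
Import ListNotations.
Open Scope R_scope.

Fixpoint chain_sum {E : Type} (rho : E -> E -> R) (x : E) (l : list E) : R :=
  match l with
  | [] => 0
  | y :: l' => rho x y + chain_sum rho y l'
  end.

Definition is_bv_metric {E : Type} (v : nat) (theta : E -> E -> R)
  (rho : E -> E -> R) : Prop :=
  (forall u w, 1 <= theta u w) /\
  (forall u w, 0 <= rho u w) /\
  (forall u w, rho u w = 0 <-> u = w) /\
  (forall u w, rho u w = rho w u) /\
  (forall (u w : E) (zs : list E),
      length zs = v -> NoDup (u :: zs ++ [w]) ->
      rho u w <= theta u w * chain_sum rho u (zs ++ [w])).

Definition bv_converges {E : Type} (rho : E -> E -> R) (s : nat -> E) (u : E) : Prop :=
  forall eps, 0 < eps -> exists n0, forall n, (n >= n0)%nat -> rho (s n) u < eps.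

Definition bv_cauchy {E : Type} (rho : E -> E -> R) (s : nat -> E) : Prop :=
  forall eps, 0 < eps -> exists n0, forall n p, (n >= n0)%nat -> (p > 0)%nat ->
    rho (s n) (s (n + p)%nat) < eps.

Definition bv_complete {E : Type} (rho : E -> E -> R) : Prop :=
  forall s : nat -> E, bv_cauchy rho s -> exists u, bv_converges rho s u.

From Stdlib Require Import Reals List Arith Lia Lra Classical FinFun Permutation.
Import ListNotations.
Open Scope R_scope.

(* The Picard orbit x_n = S^n e0 is either eventually periodic, and then its
   periodic points are fixed because S^q is a strict contraction, or injective.
   In the injective case the relaxed triangle inequality may be applied along
   pairwise distinct orbit points.  Along the chain x_0, x_L, ..., x_vL, x_k it
   gives d(x_0, x_k) <= M v d(x_0, x_L) + M c^(vL) d(x_0, x_(k-vL)), and for L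
   large M c^(vL) <= 1/2, so the distances d(x_0, x_k) are bounded; hence
   d(x_n, x_(n+p)) <= c^n d(x_0, x_p) makes the orbit Cauchy.  Along the chain
   u, x_(n+1), ..., x_(n+v), S u every link is small when u is the limit, so
   d(u, S u) = 0. *)

Lemma pow_le1 (c : R) (n : nat) : 0 <= c <= 1 -> c ^ n <= 1.
Proof. intros Hc; induction n; simpl; nra. Qed.

Lemma pow_mul_eventually_lt (c K eps : R) :
  0 <= c < 1 -> 0 <= K -> 0 < eps ->
  exists N, forall n, (N <= n)%nat -> c ^ n * K < eps.
Proof.
  intros Hc HK Heps.
  destruct (pow_lt_1_zero c ltac:(rewrite Rabs_pos_eq; lra) (eps / (K + 1))
              ltac:(apply Rdiv_lt_0_compat; lra)) as [N HN].
  exists N. intros n Hn. specialize (HN n Hn).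
  pose proof (pow_le c n (proj1 Hc)) as Hpow.
  rewrite Rabs_pos_eq in HN by exact Hpow.
  replace eps with (eps / (K + 1) * (K + 1)) by (field; lra). nra.
Qed.

Lemma prefix_bounded (a : nat -> R) (n : nat) :
  exists K, forall j, (j <= n)%nat -> a j <= K.
Proof.
  induction n as [|n [K HK]].
  - exists (a 0%nat). intros j Hj. replace j with 0%nat by lia. lra.
  - exists (Rmax K (a (S n))). intros j Hj.
    destruct (Nat.eq_dec j (S n)) as [->|Hne]; [apply Rmax_r|].
    eapply Rle_trans; [apply HK; lia | apply Rmax_l].
Qed.

Lemma bounded_of_halving_recurrence (a : nat -> R) (m : nat) (A : R) :
  (0 < m)%nat -> (forall k, (m < k)%nat -> a k <= A + a (k - m)%nat / 2) ->
  exists K, forall k, a k <= K.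
Proof.
  intros Hm Hrec. destruct (prefix_bounded a m) as [K0 HK0].
  exists (Rmax K0 (2 * A)).
  assert (Hupto : forall n k, (k <= n)%nat -> a k <= Rmax K0 (2 * A)).
  { induction n as [|n IH]; intros k Hk.
    - eapply Rle_trans; [apply HK0; lia | apply Rmax_l].
    - destruct (le_lt_dec k m) as [Hkm|Hkm].
      + eapply Rle_trans; [apply HK0; lia | apply Rmax_l].
      + pose proof (Hrec k Hkm). pose proof (IH (k - m)%nat ltac:(lia)).
        pose proof (Rmax_r K0 (2 * A)). lra. }
  intros k. exact (Hupto k k (le_n k)).
Qed.

Lemma injective_eventually_neq {A : Type} (x : nat -> A) (y : A) :
  Injective x -> exists N, forall i, (N < i)%nat -> x i <> y.
Proof.
  intros Hinj. destruct (classic (exists j, x j = y)) as [[j Hj]|Hnone].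
  - exists j. intros i Hi Hxi. rewrite <- Hj in Hxi. apply Hinj in Hxi. lia.
  - exists 0%nat. intros i _ Hxi. apply Hnone. eauto.
Qed.

Lemma injective_of_no_repeat {A : Type} (x : nat -> A) :
  ~ (exists n m, (n < m)%nat /\ x n = x m) -> Injective x.
Proof.
  intros Hnorep n m Hx.
  destruct (lt_eq_lt_dec n m) as [[Hlt|Heq]|Hlt]; auto;
    exfalso; apply Hnorep; eauto.
Qed.

Lemma NoDup_chain {A : Type} (a b : A) (l : list A) :
  NoDup l -> ~ In a l -> ~ In b l -> a <> b -> NoDup (a :: l ++ [b]).
Proof.
  intros Hl Ha Hb Hab. constructor.
  - rewrite in_app_iff. simpl. intuition.
  - apply (Permutation_NoDup (Permutation_cons_append l b)). constructor; auto.
Qed.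

Lemma chain_sum_nonneg {E : Type} (rho : E -> E -> R) (a : E) (l : list E) :
  (forall u w, 0 <= rho u w) -> 0 <= chain_sum rho a l.
Proof.
  intros Hpos. revert a. induction l as [|y l IH]; intros a; simpl; [lra|].
  pose proof (Hpos a y). pose proof (IH y). lra.
Qed.

Lemma chain_sum_map_seq_le {E : Type} (rho : E -> E -> R) (f : nat -> E)
    (b : E) (D : R) (n s : nat) :
  (forall i, (s <= i)%nat -> rho (f i) (f (S i)) <= D) ->
  chain_sum rho (f s) (map f (seq (S s) n) ++ [b])
    <= INR n * D + rho (f (s + n)%nat) b.
Proof.
  revert s. induction n as [|n IH]; intros s Hstep.
  - simpl. rewrite Nat.add_0_r. lra.
  - cbn [seq map app chain_sum]. rewrite S_INR.
    pose proof (Hstep s (le_n s)).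
    assert (Htail := IH (S s) ltac:(intros i Hi; apply Hstep; lia)).
    replace (s + S n)%nat with (S s + n)%nat by lia. lra.
Qed.

Section BvMetric.

Variables (E : Type) (v : nat) (theta rho : E -> E -> R) (M : R).
Hypothesis rho_bv : is_bv_metric v theta rho.
Hypothesis theta_le : forall u w, theta u w <= M.

Lemma dist_ge0 u w : 0 <= rho u w.
Proof. apply rho_bv. Qed.

Lemma dist_eq0 u w : rho u w = 0 <-> u = w.
Proof. apply rho_bv. Qed.

Lemma dist_sym u w : rho u w = rho w u.
Proof. apply rho_bv. Qed.

Lemma theta_bound_ge1 (u : E) : 1 <= M.
Proof. destruct rho_bv as [Hth _]. pose proof (Hth u u). pose proof (theta_le u u). lra. Qed.

Lemma dist_le_chain_sum u w zs :
  length zs = v -> NoDup (u :: zs ++ [w]) ->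
  rho u w <= M * chain_sum rho u (zs ++ [w]).
Proof.
  intros Hlen Hnd. destruct rho_bv as (_ & _ & _ & _ & Htri).
  eapply Rle_trans; [exact (Htri u w zs Hlen Hnd)|].
  apply Rmult_le_compat_r; [apply chain_sum_nonneg, dist_ge0 | apply theta_le].
Qed.

Section Contraction.

Variables (T : E -> E) (c : R).
Hypothesis c_range : 0 <= c < 1.
Hypothesis T_contraction : forall u w, rho (T u) (T w) <= c * rho u w.

Lemma contraction_nonexpansive u w : rho (T u) (T w) <= rho u w.
Proof. pose proof (T_contraction u w). pose proof (dist_ge0 u w). nra. Qed.

Lemma iter_contraction n u w :
  rho (Nat.iter n T u) (Nat.iter n T w) <= c ^ n * rho u w.
Proof.
  induction n as [|n IH]; simpl; [lra|].
  eapply Rle_trans; [apply T_contraction|]. nra.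
Qed.

Lemma contraction_fixed_point_unique u w : T u = u -> T w = w -> u = w.
Proof.
  intros Hu Hw. apply dist_eq0.
  pose proof (T_contraction u w) as H. rewrite Hu, Hw in H.
  pose proof (dist_ge0 u w). nra.
Qed.

Lemma periodic_point_fixed q y : (0 < q)%nat -> Nat.iter q T y = y -> T y = y.
Proof.
  intros Hq Hy. apply dist_eq0.
  pose proof (iter_contraction q (T y) y) as H.
  rewrite Nat.iter_swap, Hy in H.
  pose proof (pow_lt_1_compat c q c_range Hq). pose proof (dist_ge0 (T y) y). nra.
Qed.

Section Orbit.

Variable e0 : E.

Let x (n : nat) : E := Nat.iter n T e0.

Lemma orbit_repeat_fixed n m : (n < m)%nat -> x n = x m -> T (x n) = x n.
Proof.
  intros Hnm Hx. apply (periodic_point_fixed (m - n)); [lia|].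
  unfold x. rewrite <- Nat.iter_add. replace (m - n + n)%nat with m by lia.
  symmetry. exact Hx.
Qed.

Lemma orbit_dist n p : rho (x n) (x (n + p)) <= c ^ n * rho (x 0) (x p).
Proof. unfold x. rewrite Nat.iter_add. apply iter_contraction. Qed.

Hypothesis v_pos : (1 <= v)%nat.
Hypothesis x_inj : Injective x.

(* the relaxed triangle inequality along x_0, x_L, x_2L, ..., x_vL, x_k *)
Lemma orbit_dist_recurrence L k : (0 < L)%nat -> (v * L < k)%nat ->
  rho (x 0) (x k) <= M * (INR v * rho (x 0) (x L))
                     + M * c ^ (v * L) * rho (x 0) (x (k - v * L)).
Proof.
  intros HL Hk. set (f i := x (i * L)%nat).
  assert (Hnd : NoDup (x 0 :: map f (seq 1 v) ++ [x k])).
  { apply NoDup_chain.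
    - apply Injective_map_NoDup; [|apply seq_NoDup].
      intros i j Hij. apply x_inj in Hij. nia.
    - rewrite in_map_iff. intros (i & Hi & Hin). apply in_seq in Hin.
      apply x_inj in Hi. nia.
    - rewrite in_map_iff. intros (i & Hi & Hin). apply in_seq in Hin.
      apply x_inj in Hi. nia.
    - intros H0k. apply x_inj in H0k. lia. }
  assert (Hchain := dist_le_chain_sum _ _ _
                      ltac:(rewrite length_map, length_seq; reflexivity) Hnd).
  assert (Hlast : rho (f v) (x k) <= c ^ (v * L) * rho (x 0) (x (k - v * L))).
  { unfold f. replace k with (v * L + (k - v * L))%nat at 1 by lia.
    apply orbit_dist. }
  assert (Hstep : forall i, rho (f i) (f (S i)) <= rho (x 0) (x L)).
  { intros i. unfold f. rewrite Nat.mul_succ_l.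
    eapply Rle_trans; [apply orbit_dist|].
    pose proof (pow_le1 c (i * L) ltac:(lra)). pose proof (pow_le c (i * L) (proj1 c_range)).
    pose proof (dist_ge0 (x 0) (x L)). nra. }
  pose proof (chain_sum_map_seq_le rho f (x k) _ v 0 (fun i _ => Hstep i)) as Hsteps.
  simpl Nat.add in Hsteps. change (f 0%nat) with (x 0) in Hsteps.
  pose proof (theta_bound_ge1 e0). nra.
Qed.

Lemma orbit_dist_bounded : exists K, forall k, rho (x 0) (x k) <= K.
Proof.
  pose proof (theta_bound_ge1 e0) as HM.
  destruct (pow_mul_eventually_lt c M (/ 2) c_range ltac:(lra) ltac:(lra)) as [N HN].
  set (L := S N).
  assert (Hsmall : c ^ (v * L) * M < / 2) by (apply HN; unfold L; nia).
  apply (bounded_of_halving_recurrence (fun k => rho (x 0) (x k)) (v * L)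
           (M * (INR v * rho (x 0) (x L)))); [unfold L; nia|].
  intros k Hk. cbv beta.
  eapply Rle_trans; [apply (orbit_dist_recurrence L k); unfold L; lia|].
  pose proof (dist_ge0 (x 0) (x (k - v * L))). nra.
Qed.

Lemma orbit_cauchy : bv_cauchy rho x.
Proof.
  destruct orbit_dist_bounded as [K HK].
  assert (HK0 : 0 <= K) by (eapply Rle_trans; [apply dist_ge0 | apply (HK 0%nat)]).
  intros eps Heps. destruct (pow_mul_eventually_lt c K eps c_range HK0 Heps) as [N HN].
  exists N. intros n p Hn _. eapply Rle_lt_trans; [apply orbit_dist|].
  pose proof (HN n Hn). pose proof (HK p). pose proof (pow_le c n (proj1 c_range)). nra.
Qed.

(* the relaxed triangle inequality along u, x_(n+1), ..., x_(n+v), T u *)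
Lemma orbit_limit_image_dist_le u : bv_converges rho x u -> T u <> u ->
  forall eps, 0 < eps -> rho u (T u) <= M * ((INR v + 1) * eps).
Proof.
  intros Hconv Hne eps Heps.
  destruct (orbit_cauchy eps Heps) as [N1 HN1].
  destruct (Hconv eps Heps) as [N2 HN2].
  destruct (injective_eventually_neq x u x_inj) as [n1 Hn1].
  destruct (injective_eventually_neq x (T u) x_inj) as [n2 Hn2].
  set (n := (N1 + N2 + n1 + n2)%nat).
  assert (Hnd : NoDup (u :: map x (seq (S n) v) ++ [T u])).
  { apply NoDup_chain; [apply Injective_map_NoDup; [exact x_inj | apply seq_NoDup]
                        | | | congruence];
      rewrite in_map_iff; intros (i & Hi & Hin); apply in_seq in Hin;
      [apply (Hn1 i) | apply (Hn2 i)]; unfold n in *; auto; lia. }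
  assert (Hchain := dist_le_chain_sum _ _ _
                      ltac:(rewrite length_map, length_seq; reflexivity) Hnd).
  set (v' := (v - 1)%nat). assert (Hv : v = S v') by (unfold v'; lia).
  rewrite Hv in Hchain. cbn [seq map app chain_sum] in Hchain.
  assert (Hfirst : rho u (x (S n)) < eps)
    by (rewrite dist_sym; apply HN2; unfold n; lia).
  assert (Hsteps : chain_sum rho (x (S n)) (map x (seq (S (S n)) v') ++ [T u])
                   <= INR v' * eps + rho (x (S n + v')) (T u)).
  { apply chain_sum_map_seq_le. intros i Hi. rewrite <- Nat.add_1_r.
    apply Rlt_le, HN1; unfold n in *; lia. }
  assert (Hlast : rho (x (S n + v')) (T u) < eps).
  { replace (S n + v')%nat with (S (n + v')) by lia.
    eapply Rle_lt_trans; [apply contraction_nonexpansive|].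
    apply HN2. unfold n. lia. }
  rewrite Hv, S_INR. pose proof (theta_bound_ge1 e0). nra.
Qed.

Lemma orbit_limit_fixed u : bv_converges rho x u -> T u = u.
Proof.
  intros Hconv. apply NNPP. intros Hne. set (r := rho u (T u)).
  assert (Hr : 0 < r).
  { destruct (dist_ge0 u (T u)) as [Hlt|Heq]; auto.
    exfalso. apply Hne. symmetry. apply dist_eq0. auto. }
  pose proof (theta_bound_ge1 e0) as HM. pose proof (pos_INR v) as Hv.
  assert (Heps : 0 < r / (2 * M * (INR v + 1))) by (apply Rdiv_lt_0_compat; nra).
  pose proof (orbit_limit_image_dist_le u Hconv Hne _ Heps) as Hle. fold r in Hle.
  replace (M * ((INR v + 1) * (r / (2 * M * (INR v + 1))))) with (r / 2) in Hle
    by (field; lra).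
  lra.
Qed.

End Orbit.

Lemma contraction_has_fixed_point (e0 : E) :
  (1 <= v)%nat -> bv_complete rho -> exists u, T u = u.
Proof.
  intros Hv Hcomp. set (x n := Nat.iter n T e0).
  destruct (classic (exists n m, (n < m)%nat /\ x n = x m)) as [(n & m & Hnm & Hx)|Hnorep].
  - exists (x n). exact (orbit_repeat_fixed e0 n m Hnm Hx).
  - pose proof (injective_of_no_repeat x Hnorep) as Hinj.
    destruct (Hcomp x (orbit_cauchy e0 Hv Hinj)) as [u Hu].
    exists u. exact (orbit_limit_fixed e0 Hv Hinj u Hu).
Qed.

End Contraction.

End BvMetric.

Theorem mainTheorem9 (E : Type) (e0 : E) (v : nat) (theta rho : E -> E -> R)
  (S : E -> E) :
  (1 <= v)%nat ->
  is_bv_metric v theta rho ->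
  bv_complete rho ->
  (exists M, forall u w, theta u w <= M) ->
  (exists c, 0 <= c < 1 /\ forall u w, rho (S u) (S w) <= c * rho u w) ->
  exists u, S u = u /\ forall w, S w = w -> w = u.
Proof.
  intros Hv Hbv Hcomp [M HM] (c & Hc & Hcontr).
  destruct (contraction_has_fixed_point _ _ _ _ _ Hbv HM _ _ Hc Hcontr e0 Hv Hcomp)
    as [u Hu].
  exists u. split; [exact Hu|].
  intros w Hw. exact (contraction_fixed_point_unique _ _ _ _ Hbv _ _ Hc Hcontr w u Hw Hu).
Qed.
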